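(* Let $K\ge2$ and let $p,q\in\mathbb{R}^K$ satisfy $\sum_k p_k=\sum_k q_k=1$ (so that $p,q\in s_\alpha^{-1}(\Delta_{K-1})$ for all $\alpha$ sufficiently close to $1$). Then $\frac{2\alpha}{(1-\alpha)^2K}D_{\mathrm{SKL},\alpha}(p\|q)\to\|p-q\|^2$ as $\alpha\to1$, where $\|\cdot\|$ is the Euclidean norm on $\mathbb{R}^K$.
   Context: $\Delta_{K-1}$ is the probability simplex in $\mathbb{R}^K$. For $\alpha\in\mathbb{R}$, $s_\alpha(v)=(1-\alpha)v+\frac{\alpha}{K}$ componentwise, and $s_\alpha^{-1}(\Delta_{K-1})=\{v\in\mathbb{R}^K: s_\alpha(v)\in\Delta_{K-1}\}$. The smoothed KL divergence is $D_{\mathrm{SKL},\alpha}(p\|q)=\sum_{k=1}^K s_\alpha(p_k)\ln\frac{s_\alpha(p_k)}{s_\alpha(q_k)}$ for $p,q\in s_\alpha^{-1}(\Delta_{K-1})$. *)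

From HB Require Import structures.
From mathcomp Require Import all_boot all_order all_algebra.
From mathcomp Require Import all_classical all_reals all_analysis.
Set Implicit Arguments. Unset Strict Implicit. Unset Printing Implicit Defensive.
Import Order.TTheory GRing.Theory Num.Theory.
Local Open Scope ring_scope.

Definition smooth (R : realType) (K : nat) (alpha : R) (v : 'I_K -> R) : 'I_K -> R :=
  fun k => (1 - alpha) * v k + alpha / K%:R.

Definition DSKL (R : realType) (K : nat) (alpha : R) (p q : 'I_K -> R) : R :=
  \sum_(k < K) smooth alpha p k * ln (smooth alpha p k / smooth alpha q k).

Definition sqnorm (R : realType) (K : nat) (v : 'I_K -> R) : R :=
  \sum_(k < K) v k ^+ 2.

From HB Require Import structures.
From mathcomp Require Import all_boot all_order all_algebra.
From mathcomp Require Import all_classical all_reals all_analysis.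
From mathcomp Require Import ring lra.
Set Implicit Arguments. Unset Strict Implicit. Unset Printing Implicit Defensive.
Import Order.TTheory GRing.Theory Num.Theory.
Import numFieldTopology.Exports numFieldNormedType.Exports.
Local Open Scope classical_set_scope.
Local Open Scope ring_scope.

(* Write a = s_alpha(p_k), b = s_alpha(q_k) and u = (b - a) / a.  Since the
   b - a sum to zero, D_SKL is the sum of the terms a ln (a / b) + (b - a)
   = a (u - ln (1 + u)) = (b - a)^2 / (2 a) + O(|b - a|^3 / a^2).  As alpha -> 1,
   b - a = (1 - alpha) (q_k - p_k) and a -> 1 / K, so after scaling by
   2 alpha / ((1 - alpha)^2 K) the quadratic part tends to (p_k - q_k)^2 while
   the cubic remainder is O(1 - alpha).  The cubic bound on ln (1 + u) is the
   mean value theorem for ln t + t^2 / 2 - 2 t, whose derivative is (t - 1)^2 / t. *)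

Section ln_expansion.
Variable R : realType.

Let F (t : R) := ln t + t ^+ 2 / 2 - 2 * t.
Let dF (t : R) := (t - 1) ^+ 2 / t.

Let is_derive_F (t : R) : 0 < t -> is_derive t 1 F (dF t).
Proof.
move=> t_gt0; have := is_derive1_ln t_gt0.
have -> : dF t = t^-1 + t - 2 by rewrite /dF; field; rewrite gt_eqF.
move=> ?; rewrite /F.
apply: is_derive_eq; rewrite !scaler0 !add0r /GRing.scale /= !mulr1; lra.
Qed.

Let F_mean_value (a b : R) : 0 < a <= b ->
  exists2 c, a <= c <= b & F b - F a = dF c * (b - a).
Proof.
move=> /andP[a_gt0 ab].
have F_der t : t \in `]a, b[ -> is_derive t 1 F (dF t).
  by rewrite in_itv /= => /andP[a_lt _]; apply: is_derive_F; lra.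
have F_cont : {within `[a, b], continuous F}.
  apply: derivable_within_continuous => t; rewrite in_itv /= => /andP[a_lt _].
  by apply: ex_derive; apply: is_derive_F; lra.
by have [c] := MVT_segment ab F_der F_cont; rewrite in_itv /=; exists c.
Qed.

Lemma ln1p_expansion (u : R) : `|u| <= 1 / 2 ->
  `|ln (1 + u) - (u - u ^+ 2 / 2)| <= 2 * `|u| ^+ 3.
Proof.
move=> u_small.
have [c [c_ge c1u lnu]] : exists c,
    [/\ 1 / 2 <= c, `|c - 1| <= `|u| & ln (1 + u) - (u - u ^+ 2 / 2) = dF c * u].
  have [u_ge0|u_lt0] := leP 0 u.
    have [|c /andP[c_ge c_le] Fu] := @F_mean_value 1 (1 + u); first lra.
    exists c; rewrite /F ln1 !ger0_norm ?subr_ge0 // in u_small Fu *.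
    by split; lra.
  have [|c /andP[c_ge c_le] Fu] := @F_mean_value (1 + u) 1.
    by rewrite ltr0_norm in u_small; lra.
  exists c; rewrite /F ln1 ler0_norm ?ltr0_norm ?subr_le0 // in u_small Fu *.
  by split; lra.
have c_gt0 : 0 < c by lra.
have invc_le2 : c^-1 <= 2 by rewrite -[2]invrK lef_pV2 ?posrE //; lra.
have sq_le : (c - 1) ^+ 2 <= `|u| ^+ 2.
  by rewrite -real_normK ?num_real // lerXn2r ?nnegrE.
have dF_le : dF c <= 2 * `|u| ^+ 2.
  by rewrite /dF; have := sqr_ge0 (c - 1); nra.
rewrite lnu normrM ger0_norm; last by apply: divr_ge0; [exact: sqr_ge0|exact: ltW].
by rewrite exprSr mulrA ler_wpM2r.
Qed.
End ln_expansion.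

Definition kl_term (R : realType) (a b : R) : R := a * ln (a / b) + (b - a).

Lemma kl_term_quadratic_approx (R : realType) (a b : R) : 0 < a -> `|b - a| <= a / 2 ->
  `|kl_term a b - (b - a) ^+ 2 / (2 * a)| <= 2 * `|b - a| ^+ 3 / a ^+ 2.
Proof.
move=> a_gt0 ba_small; set u := (b - a) / a.
have u_small : `|u| <= 1 / 2.
  by rewrite /u normf_div (gtr0_norm a_gt0) ler_pdivrMr //; lra.
have b_eq : b = a * (1 + u) by rewrite /u; field; rewrite gt_eqF.
have u_gt : -1 < u by have := ler_norm (- u); rewrite normrN; lra.
have ln_ab : ln (a / b) = - ln (1 + u).
  by rewrite b_eq invfM mulrA divff ?gt_eqF // mul1r lnV ?posrE; lra.
have -> : kl_term a b - (b - a) ^+ 2 / (2 * a)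
    = - a * (ln (1 + u) - (u - u ^+ 2 / 2)).
  by rewrite /kl_term ln_ab /u; field; rewrite gt_eqF.
rewrite normrM normrN (gtr0_norm a_gt0).
have -> : 2 * `|b - a| ^+ 3 / a ^+ 2 = a * (2 * `|u| ^+ 3).
  by rewrite /u normf_div (gtr0_norm a_gt0); field; rewrite gt_eqF.
by rewrite ler_pM2l //; apply: ln1p_expansion.
Qed.

Lemma squeeze_dist_cvgr {T : Type} {F : set_system T} {FF : Filter F}
    {R : realFieldType} (f g h : T -> R) (l : R) :
  (\forall t \near F, `|f t - g t| <= h t) -> g @ F --> l -> h @ F --> 0 ->
  f @ F --> l.
Proof.
move=> fgh gl h0; apply: (@squeeze_cvgr _ _ _ _ (g - h) (g + h)).
- by apply: filterS fgh => t; rewrite ler_distl.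
- by have := cvgB gl h0; rewrite subr0; apply.
- by have := cvgD gl h0; rewrite addr0; apply.
Qed.

Definition smoothr (R : realType) (K alpha v : R) : R := (1 - alpha) * v + alpha / K.

Section smoothed_kl_term.
Variables (R : realType) (K x y : R).
Hypothesis K_gt0 : 0 < K.

Lemma smoothr_cvg (v : R) : smoothr K alpha v @[alpha --> (1 : R)] --> K^-1.
Proof.
have -> : K^-1 = (1 - 1) * v + 1 / K by rewrite subrr mul0r add0r div1r.
apply: cvgD; first by apply: cvgMr_tmp; apply: cvgB; [exact: cvg_cst|exact: cvg_id].
by apply: cvgMr_tmp; exact: cvg_id.
Qed.

Let d := x - y.
Let a alpha := smoothr K alpha x.
Let b alpha := smoothr K alpha y.

Let smoothr_sub alpha : b alpha - a alpha = - ((1 - alpha) * d).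
Proof. by rewrite /a /b /d /smoothr; ring. Qed.

Let g alpha := alpha * d ^+ 2 / (K * a alpha).
Let h alpha := 4 * `|alpha| * `|1 - alpha| * `|d| ^+ 3 / (K * a alpha ^+ 2).

Let g_cvg : g alpha @[alpha --> (1 : R)^'] --> d ^+ 2.
Proof.
apply: cvg_within_filter.
have Ka_cvg : K * a alpha @[alpha --> (1 : R)] --> (1 : R).
  by have := cvgMl_tmp (a := K) (smoothr_cvg x); rewrite mulfV ?gt_eqF //; apply.
have := cvgM (cvgMr_tmp (b := d ^+ 2) (@cvg_id _ (nbhs (1 : R))))
  (cvgV (oner_neq0 R) Ka_cvg).
by rewrite mul1r invr1 mulr1; apply.
Qed.

Let h_cvg : h alpha @[alpha --> (1 : R)^'] --> 0.
Proof.
apply: cvg_within_filter.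
have Ka2_cvg : K * a alpha ^+ 2 @[alpha --> (1 : R)] --> K * K^-1 ^+ 2.
  by apply: cvgMl_tmp; rewrite expr2; apply: cvgM; exact: smoothr_cvg.
have Ka2_neq0 : K * K^-1 ^+ 2 != 0 by rewrite mulf_neq0 ?expf_neq0 ?invr_eq0 ?gt_eqF.
have e_cvg : `|1 - alpha| @[alpha --> (1 : R)] --> 0.
  have := cvg_norm (cvgB (cvg_cst (1 : R)) (@cvg_id _ (nbhs (1 : R)))).
  by rewrite subrr normr0; apply.
have alpha_cvg : `|alpha| @[alpha --> (1 : R)] --> `|1 : R|.
  exact: cvg_norm cvg_id.
have := cvgM (cvgMr_tmp (b := `|d| ^+ 3) (cvgM (cvgMl_tmp (a := 4) alpha_cvg) e_cvg))
  (cvgV Ka2_neq0 Ka2_cvg).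
by rewrite !(mulr0, mul0r); apply.
Qed.

Let kl_near_quadratic : \forall alpha \near (1 : R)^',
  `|2 * alpha / ((1 - alpha) ^+ 2 * K) * kl_term (a alpha) (b alpha) - g alpha| <= h alpha.
Proof.
have a_big : \forall alpha \near (1 : R), (2 * K)^-1 < a alpha.
  apply: cvgr_gt (smoothr_cvg x) _ _.
  by rewrite ltf_pV2 ?posrE ?mulr_gt0 // ltr_pMl // ltr1n.
have ed_cvg : (1 - alpha) * d @[alpha --> (1 : R)] --> (0 : R).
  have := cvgMr_tmp (b := d) (cvgB (cvg_cst (1 : R)) (@cvg_id _ (nbhs (1 : R)))).
  by rewrite subrr mul0r; apply.
have ed_small : \forall alpha \near (1 : R), `|(1 - alpha) * d| < (4 * K)^-1.
  by apply: cvgr0_norm_lt ed_cvg _ _; rewrite invr_gt0 mulr_gt0.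
near=> alpha.
have alpha_neq1 : alpha != 1 by near: alpha; exact: nbhs_dnbhs_neq.
have e_neq0 : 1 - alpha != 0 by rewrite subr_eq0 eq_sym.
have a_gt0 : 0 < a alpha.
  apply: lt_trans (_ : (2 * K)^-1 < a alpha); first by rewrite invr_gt0 mulr_gt0.
  by near: alpha; apply: nbhs_dnbhs.
have ba_small : `|b alpha - a alpha| <= a alpha / 2.
  have : `|(1 - alpha) * d| < (4 * K)^-1 by near: alpha; apply: nbhs_dnbhs.
  have : (2 * K)^-1 < a alpha by near: alpha; apply: nbhs_dnbhs.
  rewrite smoothr_sub normrN !invfM; lra.
have -> : 2 * alpha / ((1 - alpha) ^+ 2 * K) * kl_term (a alpha) (b alpha) - g alpha
    = 2 * alpha / ((1 - alpha) ^+ 2 * K)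
      * (kl_term (a alpha) (b alpha) - (b alpha - a alpha) ^+ 2 / (2 * a alpha)).
  by rewrite /g smoothr_sub; field; rewrite e_neq0 !gt_eqF.
rewrite normrM.
apply: le_trans (ler_wpM2l (normr_ge0 _) (kl_term_quadratic_approx a_gt0 ba_small)) _.
rewrite smoothr_sub normrN normf_div !normrM normr_nat (gtr0_norm K_gt0).
rewrite le_eqVlt; apply/orP; left; apply/eqP.
by rewrite /h; field; rewrite normr_eq0 e_neq0 !gt_eqF.
Unshelve. all: by end_near.
Qed.

Lemma smoothed_kl_term_cvg :
  2 * alpha / ((1 - alpha) ^+ 2 * K)
    * kl_term (smoothr K alpha x) (smoothr K alpha y)
    @[alpha --> (1 : R)^'] --> (x - y) ^+ 2.
Proof. exact: squeeze_dist_cvgr kl_near_quadratic g_cvg h_cvg. Qed.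

End smoothed_kl_term.

Lemma DSKL_sum_kl_term (R : realType) (K : nat) (alpha : R) (p q : 'I_K -> R) :
  \sum_(k < K) p k = \sum_(k < K) q k ->
  DSKL alpha p q = \sum_(k < K) kl_term (smooth alpha p k) (smooth alpha q k).
Proof.
move=> sum_pq; rewrite /DSKL /kl_term big_split /= -[LHS]addr0; congr (_ + _).
have smooth_sub k : smooth alpha q k - smooth alpha p k = (1 - alpha) * (q k - p k).
  by rewrite /smooth; ring.
by rewrite (eq_bigr _ (fun k _ => smooth_sub k)) -mulr_sumr sumrB sum_pq subrr mulr0.
Qed.

Theorem theorem2 (R : realType) (K : nat) (hK : (2 <= K)%N) (p q : 'I_K -> R)
  (hp : \sum_(k < K) p k = 1) (hq : \sum_(k < K) q k = 1) :
  (fun alpha : R => 2 * alpha / ((1 - alpha) ^+ 2 * K%:R) * DSKL alpha p q)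
    @ (1 : R)^' --> sqnorm (fun k => p k - q k).
Proof.
have K_gt0 : 0 < K%:R :> R by rewrite ltr0n; apply: leq_trans hK.
under eq_fun do rewrite (DSKL_sum_kl_term _ (etrans hp (esym hq))) mulr_sumr.
apply: cvg_big => [|k _]; first exact: add_continuous.
exact: smoothed_kl_term_cvg.
Qed.
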